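(* The set consisting of the 1-in-3 gadget, the free terminal, and fanout gates parsimoniously simulates the NOR gate (via a planar simulation).
   Context: A gadget consists of a finite set of ports, equipped with a cyclic order, and a constraint, which is a set of subsets of the ports. A network of gadgets from $S$ is a finite undirected multigraph whose vertices are labeled by gadgets from $S$, each vertex's edge incidences being in bijection with the ports of its label. An assignment orients every edge; a vertex is satisfied if the set of its ports whose edges point into it belongs to its constraint. A simulation using gadgets from $S$ is a network of gadgets from $S$ that may additionally have dangling edges, each incident to only one vertex (equivalently, an extra outside-world vertex whose constraint contains every subset). It is planar if the graph including the outside world has a planar embedding respecting the port cyclic orders; the simulated gadget's ports are then the dangling edges in their order around the simulation. The simulated gadget's constraint consists of each set $D$ of dangling edges such that some assignment satisfying every non-outside-world vertex makes exactly the dangling edges in $D$ point into the simulation. A simulation is parsimonious if for each set in the simulated gadget's constraint there is exactly one such satisfying assignment realizing it; $S$ parsimoniously simulates $G$ if some parsimonious simulation using gadgets from $S$ has simulated gadget $G$. Gadgets: 1-in-3 gadget: ports $a,b,c$, constraint $\{\{a\},\{b\},\{c\}\}$. Free terminal: one port $a$, constraint $\{\emptyset,\{a\}\}$. $k$-way fanout gate: ports $a,c_1,\dots,c_k$, constraint $\{\{a\},\{c_1,\dots,c_k\}\}$. NOR gate: ports $a,b,c$, constraint $\{\emptyset,\{a,c\},\{b,c\},\{a,b,c\}\}$. *)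

From mathcomp Require Import all_boot.
Set Implicit Arguments. Unset Strict Implicit. Unset Printing Implicit Defensive.

(** A gadget: ports 'I_n, in the cyclic order 0,1,...,n-1, and a constraint,
    i.e. a set of subsets of the ports. *)
Record gadget := Gadget { gports : nat; gcon : {set {set 'I_gports}} }.

Definition one_in_three : gadget :=
  @Gadget 3 [set [set (@inord 2 0)]; [set (@inord 2 1)]; [set (@inord 2 2)]].

Definition free_terminal : gadget :=
  @Gadget 1 [set set0; [set (@ord0 0)]].

Definition fanout (k : nat) : gadget :=
  @Gadget k.+1 [set [set (ord0 : 'I_k.+1)]; [set i : 'I_k.+1 | i != ord0]].

Definition nor_gate : gadget :=
  @Gadget 3 [set set0; [set (@inord 2 0); (@inord 2 2)]; [set (@inord 2 1); (@inord 2 2)];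
                 [set (@inord 2 0); (@inord 2 1); (@inord 2 2)]].

Definition in_S (g : gadget) : Prop :=
  g = one_in_three \/ g = free_terminal \/ exists k, 0 < k /\ g = fanout k.

(** A simulation: [nv] internal vertices labelled by gadgets, plus the
    outside-world vertex (encoded as [None]) with [nout] ports, whose
    cyclic order 0,...,nout-1 is the order of the dangling edges around the
    simulation.  Half-edges ("darts") are pairs (vertex, port); the edges
    are given by a fixed-point-free involution [alpha] on darts. *)
Record simulation := Simulation {
  nv : nat;
  lab : 'I_nv -> gadget;
  nout : nat;
}.

Definition deg (s : simulation) (v : option 'I_(nv s)) : nat :=
  match v with Some u => gports (lab u) | None => nout s end.

Definition dart (s : simulation) : finType := {v : option 'I_(nv s) & 'I_(deg v)}.

Definition outside_dart (s : simulation) (p : 'I_(nout s)) : dart s :=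
  @Tagged _ None (fun v => 'I_(deg v)) p.

Definition inner_dart (s : simulation) (v : 'I_(nv s)) (p : 'I_(gports (lab v))) : dart s :=
  @Tagged _ (Some v) (fun v => 'I_(deg v)) p.

Definition is_outside (s : simulation) (d : dart s) : bool := tag d == None.

Definition edge_structure (s : simulation) (alpha : dart s -> dart s) : Prop :=
  [/\ forall d, alpha (alpha d) = d,
      forall d, alpha d != d
    & forall d, is_outside d -> ~~ is_outside (alpha d)].

Definition rot (s : simulation) (d : dart s) : dart s :=
  @Tagged _ (tag d) (fun v => 'I_(deg v)) (ordS (tagged d)).

(** Planarity of the graph including the outside world, with the embedding
    respecting the port cyclic orders (rotation system), via Euler's formula
    for combinatorial maps: V - E + F = 2 C (i.e. every component has
    genus 0).  Faces are the orbits of [rot \o alpha]. *)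
Definition planar (s : simulation) (alpha : dart s -> dart s) : Prop :=
  let V := (nv s).+1 in
  let D := #|dart s| in
  let F := fcard (fun d => rot (alpha d)) (@predT (dart s)) in
  let e := fun d d' : dart s => [|| rot d == d', rot d' == d | alpha d == d'] in
  let C := n_comp (connect e) (@predT (dart s)) in
  2 * V + 2 * F = D + 4 * C.

(** An assignment: [x d] is true iff the edge of dart [d] points into the
    vertex of [d]; the two ends of an edge are oriented consistently
    (every edge is oriented exactly one way). *)
Definition assignment (s : simulation) (alpha : dart s -> dart s)
  (x : {ffun dart s -> bool}) : bool :=
  [forall d, x (alpha d) == ~~ x d].

Definition satisfying (s : simulation) (x : {ffun dart s -> bool}) : bool :=
  [forall v : 'I_(nv s),
    [set p : 'I_(gports (lab v)) | x (inner_dart p)] \in gcon (lab v)].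

Definition valid (s : simulation) alpha (x : {ffun dart s -> bool}) : bool :=
  assignment alpha x && satisfying x.

(** [x] makes exactly the dangling edges in [D] point into the simulation
    (dangling edge [p] points into the simulation iff it points out of the
    outside-world vertex). *)
Definition realizes (s : simulation) (x : {ffun dart s -> bool})
  (D : {set 'I_(nout s)}) : bool :=
  [forall p, (p \in D) == ~~ x (outside_dart p)].

(** The simulated gadget: ports = dangling edges in their order around the
    simulation (cyclic order of the outside-world ports); constraint = the
    realizable sets of dangling edges. *)
Definition sim_gadget (s : simulation) (alpha : dart s -> dart s) : gadget :=
  @Gadget (nout s) [set D | [exists x, valid alpha x && realizes x D]].

Definition parsimonious (s : simulation) (alpha : dart s -> dart s) : Prop :=
  forall (D : {set 'I_(nout s)}) (x1 x2 : {ffun dart s -> bool}),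
    valid alpha x1 -> realizes x1 D -> valid alpha x2 -> realizes x2 D -> x1 = x2.

Definition planar_pars_simulates (S : gadget -> Prop) (G : gadget) : Prop :=
  exists (s : simulation) (alpha : dart s -> dart s),
    [/\ forall v : 'I_(nv s), S (lab v),
        edge_structure alpha,
        planar alpha,
        parsimonious alpha
      & sim_gadget alpha = G].

From HB Require Import structures.
From Pilot Require Import Defs.
From mathcomp Require Import all_boot.
Set Implicit Arguments. Unset Strict Implicit. Unset Printing Implicit Defensive.

(* The simulation uses three 1-in-3 gadgets T0, T1, T2, a 3-way fanout F one of
   whose outputs is the dangling edge c, two 2-way fanouts P and Q, and four
   free terminals that absorb the inputs of the fanouts and one port of T2.  T0
   joins the dangling edge a with F and P, T1 joins b with F and Q, and T2
   joins P and Q.  If c points out of the simulation, F forces a and b out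
   and P, Q on; if c points in, T0 copies a into P, T1 copies b into Q, and T2
   forbids P and Q to be both off.  Hence the satisfying assignments realize
   exactly the NOR patterns c = a || b, each by a unique orientation of the
   13 edges (checked exhaustively over all 2^13 orientations).  With the
   outside world the embedding has 11 vertices, 13 edges and 4 faces and is
   connected, so Euler's formula certifies planarity. *)

Lemma eq_set_inord k (f : nat -> bool) (A : {set 'I_k.+1}) :
  ([set p : 'I_k.+1 | f p] == A) = all (fun i => f i == (inord i \in A)) (iota 0 k.+1).
Proof.
apply/eqP/allP => [<- i | eq_fA].
  by rewrite mem_iota => /andP[_ lt_ik]; rewrite inE inordK.
by apply/setP => p; rewrite inE (eqP (eq_fA p _)) ?inord_val // mem_iota ltn_ord.
Qed.

Lemma one_in_threeP (f : nat -> bool) :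
  ([set p : 'I_3 | f p] \in gcon one_in_three) = (f 0 + f 1 + f 2 == 1).
Proof.
rewrite !inE !eq_set_inord /= !inE -!val_eqE /= !inordK //.
by case: (f 0); case: (f 1); case: (f 2).
Qed.

Lemma free_terminal_total (A : {set 'I_1}) : A \in gcon free_terminal.
Proof.
rewrite !inE; case: (set_0Vmem A) => [-> | [p p_A]]; first by rewrite eqxx.
by apply/orP; right; apply/eqP/setP => q; rewrite !inE (ord1 q) -(ord1 p) p_A eqxx.
Qed.

Definition fanout_ok (a : bool) (cs : seq bool) : bool :=
  (a && ~~ has id cs) || (~~ a && all id cs).

Lemma fanoutP k (f : nat -> bool) :
  ([set p : 'I_k.+1 | f p] \in gcon (fanout k)) = fanout_ok (f 0) [seq f i | i <- iota 1 k].
Proof.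
have inord_eq0 i : i <= k -> (@inord k i == ord0) = (i == 0).
  by move=> le_ik; rewrite -val_eqE /= inordK.
have output_port i : i \in iota 1 k -> (@inord k i == ord0) = false.
  by rewrite mem_iota add1n ltnS => /andP[i_gt0 le_ik]; rewrite inord_eq0 // eqn0Ngt i_gt0.
rewrite !inE !eq_set_inord /= !inE inord_eq0 // /fanout_ok has_map all_map -all_predC.
have -> : all (fun i => f i == (inord i \in [set ord0 : 'I_k.+1])) (iota 1 k) =
          all (fun i => ~~ f i) (iota 1 k).
  by apply: eq_in_all => i /output_port; rewrite inE => ->; rewrite eqbF_neg.
have -> : all (fun i => f i == (inord i \in [set i : 'I_k.+1 | i != ord0])) (iota 1 k) =
          all f (iota 1 k).
  by apply: eq_in_all => i /output_port; rewrite inE => ->; rewrite eqb_id.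
by case: (f 0).
Qed.

Lemma nor_gateP (f : nat -> bool) :
  ([set p : 'I_3 | f p] \in gcon nor_gate) = (f 2 == f 0 || f 1).
Proof.
rewrite !inE !eq_set_inord /= !inE -!val_eqE /= !inordK //.
by case: (f 0); case: (f 1); case: (f 2).
Qed.

Definition nor_ports (a b : bool) : {set 'I_3} :=
  [set p : 'I_3 | nth false [:: a; b; a || b] p].

Lemma eq_nor_ports a1 b1 a2 b2 :
  (nor_ports a1 b1 == nor_ports a2 b2) = (a1 == a2) && (b1 == b2).
Proof.
rewrite eq_set_inord /= !inE !inordK //=.
by case: a1; case: b1; case: a2; case: b2.
Qed.

Lemma nor_gate_ports D : (D \in gcon nor_gate) = [exists a, exists b, D == nor_ports a b].
Proof.
have D_nat : D = [set p : 'I_3 | inord p \in D] by apply/setP => p; rewrite inE inord_val.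
rewrite {1}D_nat (nor_gateP (fun i => inord i \in D)).
apply/eqP/existsP => [D2 | [a /existsP[b /eqP ->]]]; last by rewrite !inE !inordK.
exists (inord 0 \in D); apply/existsP; exists (inord 1 \in D).
by rewrite {1}D_nat (eq_set_inord (fun i => inord i \in D)) /= !inE !inordK //= -D2 !eqxx.
Qed.

(* An edge list [w] pairs up the darts in [unzip1 w ++ unzip2 w]; bit k of an
   orientation [o] says whether edge k points into the vertex of its first dart. *)
Section EdgeList.

Variable w : seq (nat * nat).
Hypothesis uniq_ends : uniq (unzip1 w ++ unzip2 w).

Definition partner (n : nat) : nat :=
  if n \in unzip1 w then nth n (unzip2 w) (index n (unzip1 w))
  else nth n (unzip1 w) (index n (unzip2 w)).

Definition orient (o : seq bool) (n : nat) : bool :=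
  if n \in unzip1 w then nth false o (index n (unzip1 w))
  else ~~ nth false o (index n (unzip2 w)).

Let size1 : size (unzip1 w) = size w. Proof. exact: size_map. Qed.
Let size2 : size (unzip2 w) = size w. Proof. exact: size_map. Qed.

Let uniq_parts :
  [/\ uniq (unzip1 w), uniq (unzip2 w) & forall n, n \in unzip2 w -> n \notin unzip1 w].
Proof.
move: uniq_ends; rewrite cat_uniq => /and3P[uniq1 /hasPn disj uniq2].
by split=> // n /disj; rewrite inE.
Qed.

Let first_end k : k < size w ->
  partner (nth 0 (unzip1 w) k) = nth 0 (unzip2 w) k /\
  forall o, orient o (nth 0 (unzip1 w) k) = nth false o k.
Proof.
case: uniq_parts => uniq1 _ _ lt_kw.
have in1 : nth 0 (unzip1 w) k \in unzip1 w by rewrite mem_nth ?size1.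
rewrite /partner /orient in1 index_uniq ?size1 //.
by split=> //; apply: set_nth_default; rewrite size2.
Qed.

Let second_end k : k < size w ->
  partner (nth 0 (unzip2 w) k) = nth 0 (unzip1 w) k /\
  forall o, orient o (nth 0 (unzip2 w) k) = ~~ nth false o k.
Proof.
case: uniq_parts => _ uniq2 disj lt_kw.
have in2 : nth 0 (unzip2 w) k \in unzip2 w by rewrite mem_nth ?size2.
rewrite /partner /orient (negbTE (disj _ in2)) index_uniq ?size2 //.
by split=> //; apply: set_nth_default; rewrite size1.
Qed.

Let endsP n : n \in unzip1 w ++ unzip2 w ->
  exists2 k, k < size w & n = nth 0 (unzip1 w) k \/ n = nth 0 (unzip2 w) k.
Proof.
rewrite mem_cat => /orP[] n_w.
  by exists (index n (unzip1 w)); [rewrite -size1 index_mem | left; rewrite nth_index].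
by exists (index n (unzip2 w)); [rewrite -size2 index_mem | right; rewrite nth_index].
Qed.

Lemma mem_partner n : n \in unzip1 w ++ unzip2 w -> partner n \in unzip1 w ++ unzip2 w.
Proof.
case/endsP=> k lt_kw [] ->; [case: (first_end lt_kw) | case: (second_end lt_kw)];
  by move=> -> _; rewrite mem_cat mem_nth ?orbT ?size_map.
Qed.

Lemma partnerK : {in unzip1 w ++ unzip2 w, involutive partner}.
Proof.
move=> n /endsP[k lt_kw [] ->].
  by case: (first_end lt_kw) => ->; case: (second_end lt_kw) => ->.
by case: (second_end lt_kw) => ->; case: (first_end lt_kw) => ->.
Qed.

Lemma partner_neq n : n \in unzip1 w ++ unzip2 w -> partner n != n.
Proof.
case: uniq_parts => _ _ disj /endsP[k lt_kw].
have in2 : nth 0 (unzip2 w) k \in unzip2 w by rewrite mem_nth ?size2.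
have /memPn neq21 := disj _ in2.
case=> ->; [case: (first_end lt_kw) | case: (second_end lt_kw)] => -> _.
  by rewrite eq_sym neq21 // mem_nth ?size1.
by rewrite neq21 // mem_nth ?size1.
Qed.

Lemma orient_partner o :
  {in unzip1 w ++ unzip2 w, forall n, orient o (partner n) = ~~ orient o n}.
Proof.
move=> n /endsP[k lt_kw [] ->].
  by case: (first_end lt_kw) => -> ->; case: (second_end lt_kw) => _ ->.
by case: (second_end lt_kw) => -> ->; case: (first_end lt_kw) => _ ->; rewrite negbK.
Qed.

Lemma orientE (y : nat -> bool) :
  {in unzip1 w ++ unzip2 w, forall n, y (partner n) = ~~ y n} ->
  {in unzip1 w ++ unzip2 w, y =1 orient [seq y e.1 | e <- w]}.
Proof.
move=> y_partner n n_w; have /endsP[k lt_kw n_k] := n_w.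
have y_k : nth false [seq y e.1 | e <- w] k = y (nth 0 (unzip1 w) k).
  by rewrite (nth_map (0, 0)) // -(nth_map _ 0 fst).
case: n_k => n_k.
  by rewrite n_k; case: (first_end lt_kw) => _ ->; rewrite y_k.
rewrite {2}n_k; case: (second_end lt_kw) => partner_n ->.
by rewrite y_k -partner_n -n_k y_partner ?negbK.
Qed.

End EdgeList.

Lemma rot_inj (s : simulation) : injective (@Defs.rot s).
Proof.
pose unrot (d : dart s) := @Tagged _ (tag d) (fun v => 'I_(deg v)) (ord_pred (tagged d)).
by apply: (can_inj (g := unrot)) => -[v p]; rewrite /Defs.rot /unrot /= ordSK.
Qed.

Lemma connect_idem (T : finType) (e : rel T) : connect (connect e) =2 connect e.
Proof. by move=> x y; apply/idP/idP; [apply: connect_sub | apply: connect1]. Qed.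

Lemma connect_bij (T U : finType) (h : U -> T) (e : rel T) (e' : rel U) :
  bijective h -> {mono h : x y / e' x y >-> e x y} ->
  {mono h : x y / connect e' x y >-> connect e x y}.
Proof.
case=> g hK gK mono_e x y; apply/connectP/connectP => [[p p_e y_p] | [p p_e ->]].
  exists (map g p); last by rewrite -(hK y) y_p -(last_map g) hK.
  elim: p x p_e {y_p} => //= z p IHp x /andP[x_z z_p].
  by rewrite -mono_e gK x_z -{1}(gK z) IHp ?hK ?gK.
exists (map h p); last by rewrite last_map.
by elim: p x p_e => //= z p IHp x /andP[x_z /IHp]; rewrite mono_e x_z.
Qed.

Lemma n_comp_bij (T U : finType) (h : U -> T) (e : rel T) (e' : rel U) :
  bijective h -> {mono h : x y / e' x y >-> e x y} -> connect_sym e ->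
  n_comp e predT = n_comp e' predT.
Proof.
move=> h_bij mono_e sym_e; have [g _ gK] := h_bij.
have mono_connect := connect_bij h_bij mono_e.
have sym_e' : connect_sym e' by move=> x y; rewrite -!mono_connect sym_e.
rewrite (adjunction_n_comp h sym_e sym_e') //.
by apply: RelAdjunction => [x _ | x y _]; [exists (g x); rewrite gK | rewrite mono_connect].
Qed.

(* The enumeration of 'I_n is built with insub, which gets stuck on the opaque
   [idP] under vm_compute.  [idx n] is a copy of 'I_n enumerated by [ord_list n]
   instead, on which vm_compute can count connected components. *)
Fixpoint ord_below n m : m <= n -> seq 'I_n :=
  match m return m <= n -> seq 'I_n with
  | 0 => fun=> [::]
  | m'.+1 => fun lt_m'n => Ordinal lt_m'n :: ord_below (ltnW lt_m'n)
  end.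

Definition ord_list n : seq 'I_n := rev (ord_below (leqnn n)).

Lemma val_ord_list n : map val (ord_list n) = iota 0 n.
Proof.
suff val_below m (le_mn : m <= n) : map val (ord_below le_mn) = rev (iota 0 m).
  by rewrite map_rev val_below revK.
elim: m le_mn => [|m IHm] le_mn //.
by rewrite [LHS]/= IHm -addn1 iotaD add0n cats1 rev_rcons.
Qed.

Definition idx n := 'I_n.
HB.instance Definition _ n := Countable.copy (idx n) (pcan_type (@valK _ _ 'I_n)).

Lemma idx_enumP n : @Finite.axiom (idx n) (ord_list n).
Proof.
move=> i; rewrite -(count_map val (pred1 (val i))) val_ord_list.
by rewrite count_uniq_mem ?iota_uniq // mem_iota ltn_ord.
Qed.

HB.instance Definition _ n := isFinite.Build (idx n) (@idx_enumP n).

Lemma card_idx n : #|idx n| = n.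
Proof. by rewrite cardT enumT unlock /= -(size_map val) val_ord_list size_iota. Qed.

Definition table_rel n (tab : seq nat) : rel (idx n) := fun i j => nth 0 tab i == j.

Definition nor_labels : seq gadget :=
  [:: one_in_three; one_in_three; one_in_three; fanout 3; fanout 2; fanout 2;
      free_terminal; free_terminal; free_terminal; free_terminal].

Definition nor_sim : simulation := @Simulation 10 (fun v => nth free_terminal nor_labels v) 3.

(* Darts are numbered 0..25: the three dangling edges a, b, c, then the ports of
   vertices 0..9 in order; port p of vertex v gets number [first_port v + p]. *)
Definition first_port : seq nat := [:: 3; 6; 9; 12; 16; 19; 22; 23; 24; 25].

Definition dart_index (d : dart nor_sim) : nat :=
  match d with
  | existT None p => p
  | existT (Some v) p => nth 0 first_port v + p
  end.

Definition nor_darts : seq (dart nor_sim) :=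
  [seq @outside_dart nor_sim p | p <- ord_list 3] ++
  flatten [seq [seq @inner_dart nor_sim v p | p <- ord_list _] | v <- ord_list 10].

Definition dart_at (n : nat) : dart nor_sim := nth (@outside_dart nor_sim ord0) nor_darts n.

Lemma card_nor_dart : #|dart nor_sim| = 26.
Proof.
rewrite card_tagged (eq_map (fun i => card_ord _)).
rewrite enumT unlock /= -enumT -map_comp sumnE big_map big_enum /=.
by rewrite !big_ord_recl big_ord0.
Qed.

Lemma dart_atK n : n < 26 -> dart_index (dart_at n) = n.
Proof.
have all_n : all (fun n => dart_index (dart_at n) == n) (iota 0 26) by vm_compute.
by move=> lt_n26; apply/eqP; move/allP: all_n; apply; rewrite mem_iota.
Qed.

Definition dart_ord (i : idx 26) : dart nor_sim := dart_at i.

Lemma dart_ord_bij : bijective dart_ord.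
Proof.
apply: inj_card_bij; last by rewrite card_nor_dart card_idx.
by move=> i j /(congr1 dart_index); rewrite !dart_atK //; apply: val_inj.
Qed.

Lemma dart_indexK : cancel dart_index dart_at.
Proof. by have [g _ gK] := dart_ord_bij; move=> d; rewrite -(gK d) /dart_ord dart_atK. Qed.

Lemma dart_index_lt d : dart_index d < 26.
Proof. by have [g _ gK] := dart_ord_bij; rewrite -(gK d) /dart_ord dart_atK. Qed.

Lemma eq_dart_at d n : n < 26 -> (d == dart_at n) = (dart_index d == n).
Proof.
move=> lt_n26; apply/eqP/eqP => [-> | <-]; first exact: dart_atK.
by rewrite dart_indexK.
Qed.

Definition nor_wiring : seq (nat * nat) :=
  [:: (0, 3); (1, 6); (2, 13); (4, 15); (5, 17); (7, 20); (8, 14);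
      (9, 18); (10, 21); (11, 25); (12, 22); (16, 23); (19, 24)].

Lemma nor_wiring_ends : perm_eq (unzip1 nor_wiring ++ unzip2 nor_wiring) (iota 0 26).
Proof. by []. Qed.

Lemma uniq_nor_ends : uniq (unzip1 nor_wiring ++ unzip2 nor_wiring).
Proof. by rewrite (perm_uniq nor_wiring_ends) iota_uniq. Qed.

Lemma mem_nor_ends n : (n \in unzip1 nor_wiring ++ unzip2 nor_wiring) = (n < 26).
Proof. by rewrite (perm_mem nor_wiring_ends) mem_iota. Qed.

Definition nor_alpha (d : dart nor_sim) : dart nor_sim :=
  dart_at (partner nor_wiring (dart_index d)).

Lemma nor_alpha_at n : n < 26 -> nor_alpha (dart_at n) = dart_at (partner nor_wiring n).
Proof. by move=> lt_n26; rewrite /nor_alpha dart_atK. Qed.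

Lemma partner_nor_lt n : n < 26 -> partner nor_wiring n < 26.
Proof. by rewrite -!mem_nor_ends; apply: (mem_partner uniq_nor_ends). Qed.

Lemma nor_alphaK : involutive nor_alpha.
Proof.
move=> d; rewrite /nor_alpha dart_atK ?partner_nor_lt ?dart_index_lt //.
by rewrite partnerK ?uniq_nor_ends ?mem_nor_ends ?dart_index_lt ?dart_indexK.
Qed.

Lemma nor_edge_structure : edge_structure nor_alpha.
Proof.
have dangling : all (fun n => is_outside (dart_at n) ==>
                     ~~ is_outside (dart_at (partner nor_wiring n))) (iota 0 26).
  by vm_compute.
split=> d; first exact: nor_alphaK.
  have ends_d : dart_index d \in unzip1 nor_wiring ++ unzip2 nor_wiring.
    by rewrite mem_nor_ends dart_index_lt.
  apply: contra_neq (partner_neq uniq_nor_ends ends_d) => /(congr1 dart_index).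
  by rewrite dart_atK ?partner_nor_lt ?dart_index_lt.
rewrite -(dart_indexK d) nor_alpha_at ?dart_index_lt //; apply/implyP.
by move/allP: dangling; apply; rewrite mem_iota dart_index_lt.
Qed.

Definition dart_table (f : dart nor_sim -> dart nor_sim) : seq nat :=
  [seq dart_index (f (dart_at n)) | n <- iota 0 26].

Lemma dart_tableE f i j : (f (dart_ord i) == dart_ord j) = table_rel (dart_table f) i j.
Proof.
by rewrite /= eq_dart_at // /table_rel /dart_table (nth_map 0) ?size_iota ?nth_iota.
Qed.

Definition nor_face (d : dart nor_sim) : dart nor_sim := Defs.rot (nor_alpha d).

Definition nor_adj (d d' : dart nor_sim) : bool :=
  [|| Defs.rot d == d', Defs.rot d' == d | nor_alpha d == d'].

(* Named so that vm_compute evaluates each table once rather than at every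
   comparison made while counting components. *)
Definition nor_rot_table := dart_table (@Defs.rot nor_sim).
Definition nor_alpha_table := dart_table nor_alpha.
Definition nor_face_table := dart_table nor_face.

Lemma nor_faces : fcard nor_face predT = 4.
Proof.
rewrite (n_comp_bij (e' := table_rel nor_face_table) dart_ord_bij); first last.
- exact: fconnect_sym (inj_comp (@rot_inj _) (inv_inj nor_alphaK)).
- by move=> i j; rewrite /= (dart_tableE nor_face).
rewrite /n_comp_mem /roots /root /connect /rgraph /pick !cardE /enum_mem unlock.
by vm_compute.
Qed.

Lemma nor_components : n_comp (connect nor_adj) predT = 1.
Proof.
have adj_sym : symmetric nor_adj.
  by move=> d d'; rewrite /nor_adj (inv_eq nor_alphaK) orbCA (eq_sym d).
rewrite (eq_n_comp (connect_idem nor_adj)).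
rewrite (n_comp_bij (e' := fun i j => [|| table_rel nor_rot_table i j,
           table_rel nor_rot_table j i | table_rel nor_alpha_table i j]) dart_ord_bij);
  first last.
- exact: sym_connect_sym.
- by move=> i j; rewrite /nor_adj !(dart_tableE (@Defs.rot _)) (dart_tableE nor_alpha).
rewrite /n_comp_mem /roots /root /connect /rgraph /pick !cardE /enum_mem unlock.
by vm_compute.
Qed.

Lemma nor_planar : planar nor_alpha.
Proof.
rewrite /planar; cbv zeta.
by rewrite card_nor_dart nor_faces nor_components.
Qed.

Lemma forall_enum (T : finType) (P : pred T) : [forall x, P x] = all P (enum T).
Proof. by apply/forallP/allP => P_x x //; apply: P_x; rewrite mem_enum. Qed.

Definition nor_circuit (y : nat -> bool) : bool :=
  [&& y 3 + y 4 + y 5 == 1, y 6 + y 7 + y 8 == 1, y 9 + y 10 + y 11 == 1,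
      fanout_ok (y 12) [:: y 13; y 14; y 15], fanout_ok (y 16) [:: y 17; y 18]
    & fanout_ok (y 19) [:: y 20; y 21]].

Lemma eq_nor_circuit (y1 y2 : nat -> bool) :
  (forall n, n < 26 -> y1 n = y2 n) -> nor_circuit y1 = nor_circuit y2.
Proof. by move=> eq_y; rewrite /nor_circuit !eq_y. Qed.

(* A named function rather than a lambda, so that the gadget lemmas rewrite
   [set p | vertex_ports y v p] by first-order matching. *)
Definition vertex_ports (y : nat -> bool) (v j : nat) : bool := y (nth 0 first_port v + j).

Lemma nor_satisfyingE (x : {ffun dart nor_sim -> bool}) :
  satisfying x = nor_circuit (fun n => x (dart_at n)).
Proof.
set y := fun n => x (dart_at n).
have port_set v :
    [set p | x (inner_dart p)] = [set p : 'I_(gports (lab v)) | vertex_ports y v p].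
  by apply/setP => p; rewrite !inE -[inner_dart p]dart_indexK.
rewrite /satisfying; under eq_forallb => v do rewrite port_set.
rewrite forall_enum !enum_ordSl enum_ord0 /=.
by rewrite !one_in_threeP !fanoutP !free_terminal_total !andbT.
Qed.

Fixpoint bitseqs n : seq (seq bool) :=
  if n is n'.+1 then [seq b :: s | b <- [:: true; false], s <- bitseqs n'] else [:: [::]].

Lemma mem_bitseqs s : s \in bitseqs (size s).
Proof. by elim: s => //= b s IHs; rewrite !mem_cat; case: b; rewrite map_f ?orbT. Qed.

(* The 3-way fanout is on (outputs pointing in) iff c = a || b; p and q are the
   states of the 2-way fanouts. *)
Definition nor_orientation (a b : bool) : seq bool :=
  let c := a || b in let p := ~~ c || a in let q := ~~ c || b in
  [:: ~~ a; ~~ b; ~~ c; ~~ c; ~~ p; ~~ q; ~~ c; ~~ p; ~~ q; p && q; ~~ c; ~~ p; ~~ q].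

Definition nor_solutions : seq (seq bool) :=
  [seq nor_orientation a b | a <- [:: true; false], b <- [:: true; false]].

Lemma nor_circuit_orient o :
  size o = 13 -> nor_circuit (orient nor_wiring o) = (o \in nor_solutions).
Proof.
have all_o : all (fun o => nor_circuit (orient nor_wiring o) == (o \in nor_solutions))
                 (bitseqs 13) by vm_compute.
by move=> size_o; apply/eqP; move/allP: all_o; apply; rewrite -size_o mem_bitseqs.
Qed.

Definition nor_assignment (a b : bool) : {ffun dart nor_sim -> bool} :=
  [ffun d => orient nor_wiring (nor_orientation a b) (dart_index d)].

Lemma nor_validP x : reflect (exists a b, x = nor_assignment a b) (valid nor_alpha x).
Proof.
apply: (iffP andP) => [[/forallP assign_x sat_x] | [a [b ->]]].
  pose y n : bool := x (dart_at n).
  have y_partner : {in unzip1 nor_wiring ++ unzip2 nor_wiring,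
                     forall n, y (partner nor_wiring n) = ~~ y n}.
    by move=> n; rewrite mem_nor_ends => lt_n26; apply/eqP; rewrite /y -nor_alpha_at.
  have y_orient n : n < 26 -> y n = orient nor_wiring [seq y e.1 | e <- nor_wiring] n.
    by rewrite -mem_nor_ends; apply: (orientE uniq_nor_ends y_partner).
  move: sat_x; rewrite nor_satisfyingE (eq_nor_circuit y_orient).
  rewrite nor_circuit_orient ?size_map // => /allpairsP[[a b] [_ _ /= o_ab]].
  exists a, b; apply/ffunP => d; rewrite ffunE -o_ab -y_orient ?dart_index_lt //.
  by rewrite /y dart_indexK.
split.
  apply/forallP => d; rewrite !ffunE /nor_alpha dart_atK ?partner_nor_lt ?dart_index_lt //.
  by rewrite orient_partner ?uniq_nor_ends ?mem_nor_ends ?dart_index_lt.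
rewrite nor_satisfyingE (@eq_nor_circuit _ (orient nor_wiring (nor_orientation a b))).
  by rewrite nor_circuit_orient //; apply/allpairsP; exists (a, b); case: a; case: b.
by move=> n lt_n26; rewrite ffunE dart_atK.
Qed.

Lemma realizes_nor_assignment a b D :
  realizes (nor_assignment a b) D = (D == nor_ports a b).
Proof.
have in_ports (p : 'I_3) :
    ~~ nor_assignment a b (@outside_dart nor_sim p) = (p \in nor_ports a b).
  by rewrite ffunE inE; case: p => [[|[|[|]]]] //=; rewrite ?negbK.
apply/forallP/eqP => [D_p | -> p]; last by rewrite in_ports.
by apply/setP => p; rewrite -in_ports; apply/eqP/D_p.
Qed.

Lemma nor_sim_gadget : sim_gadget nor_alpha = nor_gate.
Proof.
rewrite /sim_gadget; congr (@Gadget 3 _); apply/setP => D.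
rewrite inE -/(D \in gcon nor_gate) nor_gate_ports; apply/existsP/existsP.
  case=> x /andP[/nor_validP[a [b ->]]]; rewrite realizes_nor_assignment => D_ab.
  by exists a; apply/existsP; exists b.
case=> a /existsP[b D_ab]; exists (nor_assignment a b).
by rewrite realizes_nor_assignment D_ab andbT; apply/nor_validP; exists a, b.
Qed.

Lemma nor_parsimonious : parsimonious nor_alpha.
Proof.
move=> D x1 x2 /nor_validP[a1 [b1 ->]] + /nor_validP[a2 [b2 ->]].
rewrite !realizes_nor_assignment => /eqP-> /eqP/eqP.
by rewrite eq_nor_ports => /andP[/eqP-> /eqP->].
Qed.

Lemma nor_sim_in_S (v : 'I_10) : in_S (@lab nor_sim v).
Proof.
have fanout_S k : in_S (fanout k.+1) by right; right; exists k.+1.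
case: v => m /=.
by do 10 (case: m => [_ | m]; first by [left | right; left | apply: fanout_S]).
Qed.

Theorem mainTheorem13 : planar_pars_simulates in_S nor_gate.
Proof.
exists nor_sim, nor_alpha; split.
- exact: nor_sim_in_S.
- exact: nor_edge_structure.
- exact: nor_planar.
- exact: nor_parsimonious.
- exact: nor_sim_gadget.
Qed.
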